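(* Let $\{a_i\}_{i=1}^n$ be a non-decreasing sequence of real numbers and $\tau>0$. If $\pi$ is a permutation of $[n]$ such that $\pi(i)<\pi(j)$ whenever $a_j-a_i>\tau$, then $|a_{\pi(i)}-a_i|\le\tau$ for all $i\in[n]$. *)

From mathcomp Require Import all_boot all_order all_algebra all_fingroup.
Set Implicit Arguments. Unset Strict Implicit. Unset Printing Implicit Defensive.

From mathcomp Require Import all_boot all_order all_algebra all_fingroup.
Import Order.TTheory GRing.Theory Num.Theory.
Local Open Scope ring_scope.

(* If [a (pi x) - a x > tau], the set [B] of all [y] with [a y - a x > tau]
   contains [pi x], and [pi] maps [B] into [B] minus [pi x]: each [y] in [B]
   is sent above [pi x], where [a] is at least [a (pi x)].  A permutation
   cannot map a finite set into a proper subset of itself.  The lower bound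
   is the same argument for [-a] and the reversed order. *)

Lemma perm_imset_not_subsetD1 (T : finType) (pi : {perm T}) (B : {set T}) x :
  x \in B -> ~~ (pi @: B \subset B :\ x).
Proof.
move=> Bx; apply/negP => /subset_leq_card.
by rewrite card_imset ?(cardsD1 x B) ?Bx ?ltnn //; apply: perm_inj.
Qed.

Section PermDisplacement.

Variables (T : finType) (R : realDomainType) (lt : rel T).
Variables (a : T -> R) (tau : R) (pi : {perm T}).

Hypothesis lt_irr : irreflexive lt.
Hypothesis a_homo : {homo a : x y / lt x y >-> x <= y}.
Hypothesis pi_sep : forall x y, tau < a y - a x -> lt (pi x) (pi y).

Lemma perm_displacement_le x : a (pi x) - a x <= tau.
Proof.
rewrite leNgt; apply/negP => far.
pose B := [set y | tau < a y - a x].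
apply: (negP (@perm_imset_not_subsetD1 _ pi B (pi x) _)); first by rewrite inE.
apply/subsetP => _ /imsetP[y By ->]; rewrite inE in By.
have lt_pxy := pi_sep _ _ By.
rewrite !inE; apply/andP; split.
  by apply: contraTneq lt_pxy => ->; rewrite lt_irr.
by rewrite (lt_le_trans far) // lerD2r a_homo.
Qed.

End PermDisplacement.

Theorem lemma13 (R : realFieldType) (n : nat) (a : 'I_n -> R) (tau : R)
  (a_nondecr : forall i j : 'I_n, (i <= j)%N -> a i <= a j)
  (tau_pos : 0 < tau)
  (pi : 'S_n)
  (hpi : forall i j : 'I_n, a j - a i > tau -> (pi i < pi j)%N) :
  forall i : 'I_n, `|a (pi i) - a i| <= tau.
Proof.
move=> i; rewrite ler_norml lerNl opprB; apply/andP; split.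
  rewrite addrC -[a i]opprK.
  apply: (@perm_displacement_le _ _ (fun x y : 'I_n => (y < x)%N) (fun k => - a k)).
  - exact: ltnn.
  - by move=> x y /ltnW /a_nondecr; rewrite lerN2.
  - by move=> x y; rewrite opprK addrC; apply: hpi.
apply: (@perm_displacement_le _ _ (fun x y : 'I_n => (x < y)%N)).
- exact: ltnn.
- by move=> x y /ltnW /a_nondecr.
- exact: hpi.
Qed.
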